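(* In the setting below, for every nonempty $A\subseteq[n]$: $\Pr_{(f,g,h)\sim\Psi}(\neg E_1(f,g,h))\le 2^{-6}$, where $E_1(f,g,h)$ is the event $2^{-16}b\le 2^{-t(f)}|A|\le 2^{-1}b$.
   Context: $[N]:=\{0,\dots,N-1\}$. Fix integers $n\ge1$ and real $0<\varepsilon<1$. Let $b:=2^{\lceil\log_2(9\cdot 2^{23}\varepsilon^{-2})\rceil}$ and $k:=\lceil\tfrac{15}{2}\ln b+16\rceil$. Hash families: for $d\ge1$, identify $[2^d]$ with the field $\mathrm{GF}(2^d)$ via the binary representation (bits as coordinates in a fixed polynomial basis). For integers $k'\ge1$, $N\le 2^d$ and $c\le d$, $\mathcal H_{k'}([N],[2^c])$ is the uniform distribution over coefficient tuples $(a_0,\dots,a_{k'-1})\in\mathrm{GF}(2^d)^{k'}$, each giving the function $x\mapsto(\sum_i a_ix^i)\bmod 2^c$ on $[N]$ (field elements read as integers in $[2^d]$); $\mathcal G_{k'}([N])$ is the uniform distribution over the same tuples giving $x\mapsto \mathrm{tz}(\sum_i a_ix^i)$, where $\mathrm{tz}(y)$ is the number of trailing zeros of the $d$-bit binary representation of $y$ (with $\mathrm{tz}(0)=d$). Here $d$ is a fixed integer with $2^d\ge N$ and $d\ge c$. $\Psi:=\mathcal G_2([n])\times\mathcal H_2([n],[2^5b^2])\times\mathcal H_k([2^5b^2],[b])$ with the product (uniform) distribution; elements $\psi=(f,g,h)$. For fixed nonempty $A\subseteq[n]$: $t(f):=\max_{a\in A}f(a)-\log_2 b+9$. *)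

From HB Require Import structures.
From mathcomp Require Import all_boot all_order all_algebra.
From mathcomp Require Import all_classical all_reals all_analysis.
Unset Printing Implicit Defensive.
Import Order.TTheory GRing.Theory Num.Theory.
Local Open Scope ring_scope.

(* An integer x in [2^d] is identified with the field element whose
   coordinates in the polynomial basis 1, X, ..., X^(d-1) are the bits of x. *)
Definition nat2poly (d x : nat) : {poly 'F_2} :=
  \poly_(i < d) ((odd (x %/ 2 ^ i))%:R : 'F_2).

Definition poly2nat (q : {poly 'F_2}) : nat :=
  (\sum_(i < size q) (nat_of_ord ((q`_i)%R : 'F_2)) * 2 ^ i)%N.

Definition gfeval (p : {poly 'F_2}) (d k : nat) (a : 'I_k -> nat) (x : nat)
  : nat :=
  poly2nat ((\sum_(i < k) nat2poly d (a i) * nat2poly d x ^+ i) %% p).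

(* number of trailing zeros of the d-bit representation of y; tz 0 = d *)
Definition tz (d y : nat) : nat := if y == 0%N then d else logn 2 y.

(* coefficient tuples in GF(2^d)^k, read as integers in [2^d] *)
Definition coeffs (d k : nat) := {ffun 'I_k -> 'I_(2 ^ d)}.

Definition Gfun (p : {poly 'F_2}) (d k : nat) (a : coeffs d k) (x : nat) : nat :=
  tz d (gfeval p d k (fun i => nat_of_ord (a i)) x).

Definition Hfun (p : {poly 'F_2}) (d k c : nat) (a : coeffs d k) (x : nat) : nat :=
  (gfeval p d k (fun i => nat_of_ord (a i)) x %% 2 ^ c)%N.

(* log2 b = ceil(log2(9 * 2^23 * eps^-2)); positive since eps < 1 *)
Definition log2b {R : realType} (eps : R) : nat :=
  `| Num.ceil (ln (9 * 2 ^+ 23 / eps ^+ 2) / ln 2) |%N.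

Definition bpar {R : realType} (eps : R) : nat := (2 ^ log2b eps)%N.

Definition kpar {R : realType} (eps : R) : nat :=
  `| Num.ceil (15 / 2 * ln ((bpar eps)%:R : R) + 16) |%N.

(* ---------- the sample space Psi = G_2([n]) x H_2([n],[2^5 b^2]) x H_k([2^5 b^2],[b]) *)
Definition Psi (d1 d2 d3 k : nat) : finType :=
  (coeffs d1 2 * coeffs d2 2 * coeffs d3 k)%type.

Definition maxf {n : nat} (A : {set 'I_n}) (p1 : {poly 'F_2}) (d1 : nat)
  (f : coeffs d1 2) : nat :=
  (\max_(a in A) Gfun p1 d1 2 f (nat_of_ord a))%N.

Definition tpar {R : realType} (eps : R) {n : nat} (A : {set 'I_n})
  (p1 : {poly 'F_2}) (d1 : nat) (f : coeffs d1 2) : int :=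
  ((maxf A p1 d1 f)%:Z - (log2b eps)%:Z + 9)%R.

Definition E1 {R : realType} (eps : R) {n : nat} (A : {set 'I_n})
  (p1 : {poly 'F_2}) (d1 d2 d3 : nat)
  (psi : Psi d1 d2 d3 (kpar eps)) : bool :=
  let f := psi.1.1 in
  let bR := ((bpar eps)%:R : R) in
  let v := (2 : R) ^ (- tpar eps A p1 d1 f) * (#|A|%:R) in
  (2 ^- 16 * bR <= v) && (v <= 2 ^- 1 * bR).

Definition prob_notE1 {R : realType} (eps : R) {n : nat} (A : {set 'I_n})
  (p1 : {poly 'F_2}) (d1 d2 d3 : nat) : R :=
  (#|[set psi : Psi d1 d2 d3 (kpar eps) | ~~ E1 eps A p1 d1 d2 d3 psi]|%:R
     / #|[set: Psi d1 d2 d3 (kpar eps)]|%:R).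

(* Only the G_2-coordinate f of psi matters.  Let s = floor(log2 |A|) and let
   Z_j(f) be the number of a in A with f(a) >= j.  Over GF(2^d) the map
   x |-> a0 + a1 x is a pairwise independent hash, and a uniform d-bit value has
   at least j trailing zeros with probability 2^-j; hence E Z_j = |A| 2^-j and
   E Z_j^2 <= E Z_j + (E Z_j)^2.  E_1 can only fail when max_A f >= s + 8, i.e.
   Z_(s+8) <> 0, which has probability at most E Z_(s+8) < 2^-7 (Markov), or when
   max_A f <= s - 8, i.e. Z_(s-7) = 0, which has probability at most
   1 / E Z_(s-7) <= 2^-7 (second moment method). *)

From HB Require Import structures.
From mathcomp Require Import all_boot all_order all_algebra.
From mathcomp Require Import all_classical all_reals all_analysis.
From mathcomp Require Import zify ring.
Import Order.TTheory GRing.Theory Num.Theory.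
Set Implicit Arguments.
Unset Strict Implicit.
Local Open Scope ring_scope.

Lemma poly2nat_widen (q : {poly 'F_2}) m : (size q <= m)%N ->
  poly2nat q = (\sum_(i < m) (nat_of_ord (q`_i)%R) * 2 ^ i)%N.
Proof.
move=> qm; rewrite /poly2nat -(subnKC qm) big_split_ord /=.
by rewrite [X in (_ + X)%N]big1 ?addn0 // => i _; rewrite nth_default ?leq_addr.
Qed.

Lemma poly2nat_MXaddC (q : {poly 'F_2}) c :
  poly2nat (q * 'X + c%:P) = (nat_of_ord c + 2 * poly2nat q)%N.
Proof.
have coefE i : (q * 'X + c%:P)`_i = if i is j.+1 then q`_j else c.
  by rewrite coefD coefMX coefC; case: i => [|j] /=; rewrite ?add0r ?addr0.
rewrite (@poly2nat_widen _ (size q).+1); last by rewrite size_MXaddC; case: ifP.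
rewrite big_ord_recl coefE muln1 (@poly2nat_widen q _ (leqnn _)) big_distrr /=.
by congr (_ + _)%N; apply: eq_bigr => i _; rewrite coefE expnS mulnCA.
Qed.

Lemma nat2polyS d x :
  nat2poly d.+1 x = nat2poly d (x %/ 2) * 'X + ((odd x)%:R)%:P.
Proof.
apply/polyP => i; rewrite coefD coefMX coefC /nat2poly !coef_poly.
case: i => [|i] /=; first by rewrite add0r expn0 divn1.
by rewrite addr0 ltnS expnS divnMA.
Qed.

Lemma F2_oddK (c : 'F_2) : (odd c)%:R = c.
Proof. by apply/val_inj; case: c => [[|[|m]] ?]. Qed.

Lemma size_leSP (q : {poly 'F_2}) d : (size q <= d.+1)%N ->
  exists q' c, q = q' * 'X + c%:P /\ (size q' <= d)%N.
Proof.
elim/poly_ind: q => [|q c _] qd; first by exists 0, 0; rewrite mul0r add0r size_poly0.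
exists q, c; split=> //; move: qd; rewrite size_MXaddC.
by case: ifP => // /andP[/eqP -> _]; rewrite size_poly0.
Qed.

Lemma poly2nat_lt d (q : {poly 'F_2}) : (size q <= d)%N -> (poly2nat q < 2 ^ d)%N.
Proof.
elim: d q => [|d IH] q qd.
  by move: qd; rewrite leqn0 size_poly_eq0 => /eqP ->; rewrite /poly2nat size_poly0 big_ord0.
have [q' [c [-> q'd]]] := size_leSP qd.
rewrite poly2nat_MXaddC expnS; have := IH _ q'd; have : (nat_of_ord c < 2)%N by case: c.
lia.
Qed.

Lemma poly2natK d (q : {poly 'F_2}) : (size q <= d)%N -> nat2poly d (poly2nat q) = q.
Proof.
elim: d q => [|d IH] q qd.
  by move: qd; rewrite leqn0 size_poly_eq0 => /eqP ->; apply/polyP => i; rewrite coef_poly coef0.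
have [q' [c [-> q'd]]] := size_leSP qd.
have c2 : (nat_of_ord c < 2)%N by case: c.
rewrite nat2polyS poly2nat_MXaddC oddD oddM addbF F2_oddK.
by rewrite divnDr ?dvdn_mulr // mulKn // divn_small // IH.
Qed.

Lemma nat2polyK d x : (x < 2 ^ d)%N -> poly2nat (nat2poly d x) = x.
Proof.
elim: d x => [|d IH] x xd.
  move: xd; rewrite expn0 ltnS leqn0 => /eqP ->.
  by rewrite /poly2nat /nat2poly poly_def big_ord0 size_poly0 big_ord0.
rewrite nat2polyS poly2nat_MXaddC IH; last by rewrite ltn_divLR // -expnSr.
by rewrite [RHS](divn_eq x 2) modn2; case: (odd x); rewrite /= ?modn_small //; lia.
Qed.

Section AffineModp.
Variables (F : fieldType) (p : {poly F}).
Hypothesis irr_p : irreducible_poly p.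

Lemma irredp_dvdpM (q r : {poly F}) : p %| q * r -> (p %| q) || (p %| r).
Proof.
case pq: (p %| q) => //= pqr.
by rewrite -(Gauss_dvdpr _ (_ : coprimep p q)) // irreducible_poly_coprime // pq.
Qed.

Lemma dvdp_small_eq0 (q : {poly F}) : (size q < size p)%N -> p %| q -> q = 0.
Proof. by move=> qp /modp_eq0; rewrite modp_small. Qed.

Lemma modp_eq_dvdp (q r : {poly F}) : q %% p = r %% p -> p %| q - r.
Proof. by move=> qr; apply/modp_eq0P; rewrite modpD modpN qr subrr. Qed.

Lemma affine_modp_inj (a0 a1 b0 b1 x y : {poly F}) :
  all (fun q : {poly F} => size q < size p)%N [:: a0; a1; b0; b1; x; y] -> x != y ->
  (a0 + a1 * x) %% p = (b0 + b1 * x) %% p ->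
  (a0 + a1 * y) %% p = (b0 + b1 * y) %% p -> a0 = b0 /\ a1 = b1.
Proof.
rewrite /= !andbT => /and5P[a0p a1p b0p b1p /andP[xp yp]] xy ex ey.
have small_sub (q r : {poly F}) :
    (size q < size p)%N -> (size r < size p)%N -> (size (q - r)%R < size p)%N.
  by move=> qp rp; rewrite (leq_ltn_trans (size_polyD _ _)) // size_polyN gtn_max qp.
have eq_of_dvdp (q r : {poly F}) :
    (size q < size p)%N -> (size r < size p)%N -> p %| q - r -> q = r.
  by move=> qp rp /(dvdp_small_eq0 (small_sub _ _ qp rp))/eqP; rewrite subr_eq0 => /eqP.
have dvd_diff : p %| (a1 - b1) * (x - y).
  have -> : (a1 - b1) * (x - y) = (a0 + a1 * x - (b0 + b1 * x)) - (a0 + a1 * y - (b0 + b1 * y)).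
    by ring.
  by rewrite dvdp_sub // modp_eq_dvdp.
have a1b1 : a1 = b1.
  case/orP: (irredp_dvdpM dvd_diff) => [|/(eq_of_dvdp _ _ xp yp) exy]; first exact: eq_of_dvdp.
  by rewrite exy eqxx in xy.
split=> //; apply: eq_of_dvdp => //.
by move/modp_eq_dvdp: ex; rewrite a1b1 (_ : _ - _ = a0 - b0) //; ring.
Qed.

End AffineModp.

Definition lin_hash (p : {poly 'F_2}) d (f : coeffs d 2) (x : nat) : nat :=
  gfeval p d 2 (fun i => nat_of_ord (f i)) x.

Section LinearHash.
Variables (p : {poly 'F_2}) (d : nat).
Hypotheses (irr_p : irreducible_poly p) (size_p : size p = d.+1).

Lemma size_nat2poly_lt x : (size (nat2poly d x) < size p)%N.
Proof. by rewrite size_p ltnS size_poly. Qed.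

Lemma lin_hashE (f : coeffs d 2) x :
  lin_hash p f x = poly2nat ((nat2poly d (f ord0) + nat2poly d (f ord_max) * nat2poly d x) %% p).
Proof.
rewrite /lin_hash /gfeval !big_ord_recr big_ord0 /= add0r expr0 mulr1 expr1.
by congr (poly2nat ((nat2poly d (f _) + nat2poly d (f _) * _) %% _)); apply: val_inj.
Qed.

Lemma size_modp_le (q : {poly 'F_2}) : (size (q %% p)%R <= d)%N.
Proof. by rewrite -ltnS -size_p ltn_modpN0 // -size_poly_eq0 size_p. Qed.

Lemma lin_hash_lt (f : coeffs d 2) x : (lin_hash p f x < 2 ^ d)%N.
Proof. by rewrite lin_hashE poly2nat_lt ?size_modp_le. Qed.

Lemma lin_hash_inj x y (f g : coeffs d 2) : x != y -> (x < 2 ^ d)%N -> (y < 2 ^ d)%N ->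
  lin_hash p f x = lin_hash p g x -> lin_hash p f y = lin_hash p g y -> f = g.
Proof.
move=> xy xd yd; rewrite !lin_hashE.
move=> /(congr1 (nat2poly d)) ex /(congr1 (nat2poly d)) ey.
rewrite !poly2natK ?size_modp_le // in ex ey.
have nat2poly_inj (u v : 'I_(2 ^ d)) : nat2poly d u = nat2poly d v -> u = v.
  by move=> /(congr1 poly2nat); rewrite !nat2polyK // => /val_inj.
have exy : nat2poly d x != nat2poly d y.
  by apply: contra xy => /eqP/(congr1 poly2nat); rewrite !nat2polyK // => ->.
have [|/nat2poly_inj e0 /nat2poly_inj e1] := affine_modp_inj irr_p _ exy ex ey.
  by rewrite /= !size_nat2poly_lt.
apply/ffunP => -[[|[|//]] i2].
  by rewrite (_ : Ordinal i2 = ord0) //; apply: val_inj.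
by rewrite (_ : Ordinal i2 = ord_max) //; apply: val_inj.
Qed.

Lemma card_lin_hash2 x y (P Q : pred nat) : x != y -> (x < 2 ^ d)%N -> (y < 2 ^ d)%N ->
  #|[set f : coeffs d 2 | P (lin_hash p f x) && Q (lin_hash p f y)]| =
  (#|[set u : 'I_(2 ^ d) | P u]| * #|[set v : 'I_(2 ^ d) | Q v]|)%N.
Proof.
move=> xy xd yd.
pose phi (f : coeffs d 2) := (Ordinal (lin_hash_lt f x), Ordinal (lin_hash_lt f y)).
have phi_inj : injective phi by move=> f g [] /(lin_hash_inj xy xd yd); apply.
have phi_bij : bijective phi.
  by apply: inj_card_bij phi_inj _; rewrite card_prod card_ffun !card_ord.
rewrite -cardsX -(on_card_preimset (onW_bij _ phi_bij)).
by apply: eq_card => f; rewrite !inE.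
Qed.

Lemma card_lin_hash x (P : pred nat) : (x < 2 ^ d)%N ->
  #|[set f : coeffs d 2 | P (lin_hash p f x)]| = (#|[set u : 'I_(2 ^ d) | P u]| * 2 ^ d)%N.
Proof.
move=> xd; have d_gt0 : (0 < d)%N by case: irr_p; rewrite size_p.
pose y := (x == 0)%N : nat.
have xy : x != y by rewrite /y; case: (x =P 0) => [->|/eqP].
have yd : (y < 2 ^ d)%N.
  by rewrite (leq_ltn_trans _ (ltn_expl d (ltnSn 1))) // (leq_trans (leq_b1 _)).
transitivity #|[set f : coeffs d 2 | P (lin_hash p f x) && predT (lin_hash p f y)]|.
  by apply: eq_card => f; rewrite !inE andbT.
by rewrite card_lin_hash2 // cardsT card_ord.
Qed.

End LinearHash.

Local Close Scope ring_scope.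

Lemma sum_nat_boolE (T : finType) (P : pred T) : \sum_(x : T) P x = #|[set x | P x]|.
Proof. by rewrite -sum1dep_card [RHS]big_mkcond; apply: eq_bigr => x _; case: (P x). Qed.

Lemma card_neq0_le_sum (T : finType) (Z : T -> nat) :
  #|[set x | Z x != 0]| <= \sum_(x : T) Z x.
Proof. by rewrite -sum_nat_boolE leq_sum // => x _; case: (Z x). Qed.

(* Summing [(N z - S)^2 >= [z = 0] S^2] over the space, with [S] the total mass. *)
Lemma second_moment_method (T : finType) (Z : T -> nat) :
  #|[set x | Z x == 0]| * (\sum_(x : T) Z x) ^ 2 + #|T| * (\sum_(x : T) Z x) ^ 2
  <= #|T| ^ 2 * \sum_(x : T) Z x ^ 2.
Proof.
set S := \sum_(x : T) Z x; set N := #|T|.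
have pointwise x : (Z x == 0) * S ^ 2 + 2 * (N * Z x * S) <= (N * Z x) ^ 2 + S ^ 2.
  case: eqP => [->|_]; first by rewrite muln0 !mul0n muln0 add0n addn0 mul1n.
  by rewrite mul0n add0n (nat_Cauchy (N * Z x) S).1.
have := @leq_sum _ (index_enum T) xpredT _ _ (fun x _ => pointwise x).
rewrite big_split [X in _ <= X]big_split /= -big_distrl sum_nat_boolE.
rewrite -big_distrr -big_distrl -big_distrr /= -/S.
under eq_bigr do rewrite expnMn.
by rewrite -big_distrr sum_nat_const -/N /=; nia.
Qed.

Lemma card_dvdn_ord N m : 0 < m -> m %| N -> #|[set u : 'I_N | m %| u]| = N %/ m.
Proof.
move=> m_gt0 /dvdnP[k ->]; rewrite mulnK //.
have mw_lt (w : 'I_k) : w * m < k * m by rewrite ltn_pmul2r.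
pose g w := Ordinal (mw_lt w).
have g_inj : injective g by move=> w1 w2 [] /eqP; rewrite eqn_pmul2r // => /eqP/val_inj.
rewrite -[RHS](card_ord k) -(card_imset _ g_inj); apply: eq_card => u; rewrite inE.
apply/idP/imsetP => [/dvdnP[w uw] | [w _ ->]]; last exact: dvdn_mull.
have w_lt : w < k by rewrite -(ltn_pmul2r m_gt0) -uw.
by exists (Ordinal w_lt) => //; apply: val_inj.
Qed.

Lemma tz_le d u : u < 2 ^ d -> tz d u <= d.
Proof.
rewrite /tz; case: eqP => // /eqP u_neq0 ud.
rewrite -(leq_exp2l _ _ (ltnSn 1)) ltnW // (leq_ltn_trans _ ud) //.
by rewrite dvdn_leq ?lt0n // pfactor_dvdnn.
Qed.

Lemma card_tz_ge d j : j <= d -> #|[set u : 'I_(2 ^ d) | j <= tz d u]| = 2 ^ (d - j).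
Proof.
move=> jd; rewrite expnB // -card_dvdn_ord ?expn_gt0 ?dvdn_exp2l //.
apply: eq_card => u; rewrite !inE /tz; case: eqP => [->|/eqP u_neq0]; first by rewrite jd dvdn0.
by rewrite pfactor_dvdn // lt0n.
Qed.

Definition count_tz_ge (p : {poly 'F_2}) d n (A : {set 'I_n}) j (f : coeffs d 2) : nat :=
  \sum_(a in A) (j <= Gfun p d 2 f a).

Section TrailingZeroCounts.
Variables (p : {poly 'F_2}) (d n : nat) (A : {set 'I_n}).
Hypotheses (irr_p : irreducible_poly p) (size_p : size p = d.+1) (n_le : n <= 2 ^ d).

Let ord_lt (a : 'I_n) : a < 2 ^ d := leq_trans (ltn_ord a) n_le.

Lemma sum_count_tz_ge j : j <= d ->
  \sum_(f : coeffs d 2) count_tz_ge p A j f = #|A| * (2 ^ (d - j) * 2 ^ d).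
Proof.
move=> jd; rewrite exchange_big -sum_nat_const; apply: eq_bigr => a _.
by rewrite sum_nat_boolE (card_lin_hash irr_p size_p (fun v => j <= tz d v)) ?card_tz_ge.
Qed.

Lemma sum_sqr_count_tz_ge j : j <= d ->
  \sum_(f : coeffs d 2) count_tz_ge p A j f ^ 2 =
  #|A| * (2 ^ (d - j) * 2 ^ d + #|A|.-1 * (2 ^ (d - j)) ^ 2).
Proof.
move=> jd; pose hit (f : coeffs d 2) (a : 'I_n) := j <= Gfun p d 2 f a.
transitivity (\sum_(a in A) \sum_(b in A) \sum_(f : coeffs d 2) (hit f a && hit f b : nat)).
  rewrite (eq_bigr (fun f => count_tz_ge p A j f * count_tz_ge p A j f)) => [|f _];
    last by rewrite mulnn.
  under eq_bigr => f _ do rewrite /count_tz_ge big_distrl /=.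
  rewrite exchange_big; apply: eq_bigr => a _.
  under eq_bigr => f _ do rewrite big_distrr /=.
  rewrite exchange_big; apply: eq_bigr => b _; apply: eq_bigr => f _.
  by rewrite /hit; case: (j <= _); case: (j <= _).
rewrite -sum_nat_const; apply: eq_bigr => a aA; rewrite (bigD1 a) //=.
congr (_ + _).
  rewrite sum_nat_boolE -card_tz_ge //.
  rewrite -(card_lin_hash irr_p size_p (fun v => j <= tz d v) (ord_lt a)).
  by apply: eq_card => f; rewrite !inE andbb.
rewrite (eq_bigr (fun _ => (2 ^ (d - j)) ^ 2)) => [|b /andP[_ ba]].
  rewrite sum_nat_const (cardsD1 a A) aA add1n succnK; congr (_ * _).
  by apply: eq_card => b; rewrite !inE andbC.
have ab : (a : nat) != b by apply: contra ba => /eqP/val_inj ->.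
pose P v := j <= tz d v.
by rewrite sum_nat_boolE (card_lin_hash2 irr_p size_p P P ab (ord_lt a) (ord_lt b)) card_tz_ge.
Qed.

Lemma maxf_le (f : coeffs d 2) : maxf A p d f <= d.
Proof. by apply/bigmax_leqP => a _; apply/tz_le/lin_hash_lt. Qed.

Lemma count_tz_ge_eq0 j (f : coeffs d 2) : 0 < j ->
  (count_tz_ge p A j f == 0) = (maxf A p d f < j).
Proof.
move=> j_gt0; rewrite /count_tz_ge /maxf sum_nat_eq0 -(prednK j_gt0) ltnS.
apply/forall_inP/bigmax_leqP => le_j a aA.
  by have := le_j a aA; rewrite eqb0 -ltnNge ltnS.
by rewrite eqb0 -ltnNge ltnS le_j.
Qed.

Lemma card_count_tz_ge_eq0 j : j <= d -> 0 < #|A| ->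
  #|[set f : coeffs d 2 | count_tz_ge p A j f == 0]| * (#|A| * 2 ^ (d - j)) <= (2 ^ d) ^ 3.
Proof.
move=> jd A_gt0; have := second_moment_method (count_tz_ge p (d:=d) A j).
rewrite sum_count_tz_ge // sum_sqr_count_tz_ge // card_ffun !card_ord.
rewrite -(prednK A_gt0) succnK.
set K := #|_|; set a := #|A|.-1; set c := 2 ^ (d - j); set N := 2 ^ d => H.
have c_gt0 : 0 < c by rewrite expn_gt0.
have N_gt0 : 0 < N by rewrite expn_gt0.
rewrite -(@leq_pmul2r (a.+1 * c * N ^ 2)) ?muln_gt0 ?c_gt0 ?expn_gt0 ?N_gt0 //.
nia.
Qed.

Lemma card_maxf_ge s : #|A| < 2 ^ s.+1 ->
  #|[set f : coeffs d 2 | s + 8 <= maxf A p d f]| * 2 ^ 7 <= (2 ^ d) ^ 2.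
Proof.
move=> A_lt; have [sd | ds] := leqP (s + 8) d; last first.
  rewrite (_ : [set f | _] = finset.set0) ?cards0 //; apply/setP => f.
  by rewrite !inE leqNgt (leq_ltn_trans (maxf_le f) ds).
have -> : [set f : coeffs d 2 | s + 8 <= maxf A p d f] = [set f | count_tz_ge p A (s + 8) f != 0].
  by apply/setP => f; rewrite !inE count_tz_ge_eq0 ?addn_gt0 ?orbT // -leqNgt.
have := card_neq0_le_sum (count_tz_ge p (d:=d) A (s + 8)); rewrite sum_count_tz_ge //.
have e : 2 ^ s.+1 * 2 ^ (d - (s + 8)) * 2 ^ 7 = 2 ^ d by rewrite -!expnD; congr (2 ^ _); lia.
move: e A_lt; rewrite (_ : 2 ^ 7 = 128) //; nia.
Qed.

Lemma card_maxf_le s : 2 ^ s <= #|A| ->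
  #|[set f : coeffs d 2 | maxf A p d f + 8 <= s]| * 2 ^ 7 <= (2 ^ d) ^ 2.
Proof.
move=> A_ge; have [s_lt8 | s_ge8] := ltnP s 8.
  rewrite (_ : [set f | _] = finset.set0) ?cards0 //; apply/setP => f.
  by rewrite !inE; lia.
have sd : s <= d.
  rewrite -(leq_exp2l _ _ (ltnSn 1)) (leq_trans A_ge) // (leq_trans (max_card _)) //.
  by rewrite card_ord.
have A_gt0 : 0 < #|A| by rewrite (leq_trans _ A_ge) ?expn_gt0.
have sub : #|[set f : coeffs d 2 | maxf A p d f + 8 <= s]| <=
           #|[set f : coeffs d 2 | count_tz_ge p A (s - 7) f == 0]|.
  by apply: subset_leq_card; apply/fintype.subsetP => f; rewrite !inE count_tz_ge_eq0; lia.
have e : 2 ^ s * 2 ^ (d - (s - 7)) = 2 ^ 7 * 2 ^ d by rewrite -!expnD; congr (2 ^ _); lia.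
have zero_bound := card_count_tz_ge_eq0 (leq_trans (leq_subr 7 s) sd) A_gt0.
rewrite -(@leq_pmul2r (2 ^ d)) ?expn_gt0 // -mulnA -e -expnSr (leq_trans _ zero_bound) //.
by rewrite leq_mul // leq_mul2r A_ge orbT.
Qed.

End TrailingZeroCounts.

Lemma card_set_fst (T1 T2 : finType) (B : {set T1}) :
  #|[set x : T1 * T2 | x.1 \in B]| = #|B| * #|T2|.
Proof. by rewrite -cardsT -cardsX; apply: eq_card => -[x y]; rewrite !inE andbT. Qed.

Local Open Scope ring_scope.

Lemma E1_of_maxf_near (R : realType) (eps : R) n (A : {set 'I_n}) p d1 d2 d3
    (psi : Psi d1 d2 d3 (kpar eps)) s :
  (2 ^ s <= #|A| < 2 ^ s.+1)%N ->
  (maxf A p d1 psi.1.1 <= s + 7)%N -> (s <= maxf A p d1 psi.1.1 + 7)%N ->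
  E1 eps A p d1 d2 d3 psi.
Proof.
rewrite /E1 /tpar /bpar; set M := maxf _ _ _ _; set L := log2b eps; set a := #|A|.
move=> /andP[a_ge a_lt] M_le M_ge.
have -> : (2 : R) ^ (- (M%:Z - L%:Z + 9)) = 2 ^+ L / 2 ^+ (M + 9).
  have -> : - (M%:Z - L%:Z + 9) = L%:Z - (M + 9)%N%:Z by rewrite PoszD; ring.
  by rewrite exprzDr ?unitfE ?pnatr_eq0 // -invr_expz.
have lower : (2 ^ (M + 9) <= 2 ^ 16 * a)%N.
  by rewrite (leq_trans _ (leq_mul (leqnn _) a_ge)) // -expnD leq_exp2l //; lia.
have upper : (a <= 2 ^ (M + 8))%N by rewrite (leq_trans (ltnW a_lt)) // leq_exp2l //; lia.
move: lower upper; rewrite -!(ler_nat R) !natrM !natrX => lower upper.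
have pow_gt0 k : (0 : R) < 2 ^+ k by rewrite exprn_gt0.
apply/andP; split; rewrite mulrAC.
  rewrite ler_pdivlMr // [_ * 2 ^+ L]mulrC -mulrA ler_pM2l // mulrC ler_pdivrMr //.
  by rewrite mulrC.
rewrite ler_pdivrMr // [_ * 2 ^+ L]mulrC -mulrA ler_pM2l //.
by rewrite expr1 addnS exprS mulKf ?pnatr_eq0.
Qed.

Theorem lemma9 (R : realType) (n : nat) (eps : R)
  (d1 d2 d3 : nat) (p1 p2 p3 : {poly 'F_2}) (A : {set 'I_n}) :
  (1 <= n)%N -> 0 < eps < 1 ->
  (* field GF(2^d1) for G_2([n]) *)
  irreducible_poly p1 -> size p1 = d1.+1 -> (n <= 2 ^ d1)%N ->
  (* field GF(2^d2) for H_2([n],[2^5 b^2]) : 2^d2 >= n, d2 >= c = 5 + 2 log2 b *)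
  irreducible_poly p2 -> size p2 = d2.+1 -> (n <= 2 ^ d2)%N ->
  (5 + 2 * log2b eps <= d2)%N ->
  (* field GF(2^d3) for H_k([2^5 b^2],[b]) : 2^d3 >= 2^5 b^2, d3 >= log2 b *)
  irreducible_poly p3 -> size p3 = d3.+1 ->
  (2 ^ 5 * bpar eps ^ 2 <= 2 ^ d3)%N -> (log2b eps <= d3)%N ->
  A != finset.set0 ->
  prob_notE1 eps A p1 d1 d2 d3 <= 2 ^- 6.
Proof.
move=> _ _ irr_p1 size_p1 n_le _ _ _ _ _ _ _ _ A_neq0.
have A_gt0 : (0 < #|A|)%N by rewrite card_gt0.
have /andP[A_ge A_lt] := trunc_log_bounds (ltnSn 1) A_gt0.
set s := trunc_log 2 #|A| in A_ge A_lt.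
set large := [set f : coeffs d1 2 | (s + 8 <= maxf A p1 d1 f)%N].
set small := [set f : coeffs d1 2 | (maxf A p1 d1 f + 8 <= s)%N].
set bad := large :|: small.
have bad_bound : (#|bad| * 2 ^ 6 <= (2 ^ d1) ^ 2)%N.
  have := card_maxf_ge irr_p1 size_p1 n_le A_lt.
  have := card_maxf_le irr_p1 size_p1 n_le A_ge.
  have := (leq_card_setU large small).1.
  by rewrite -/large -/small -/bad (_ : 2 ^ 7 = 128)%N // (_ : 2 ^ 6 = 64)%N //; lia.
have notE1_bad : [set psi | ~~ E1 eps A p1 d1 d2 d3 psi] \subset [set psi | psi.1.1 \in bad].
  apply/fintype.subsetP => psi; rewrite !inE; apply: contraR.
  rewrite negb_or -!ltnNge => /andP[not_large not_small].
  by apply: (E1_of_maxf_near (s := s)); rewrite ?A_ge ?A_lt //; lia.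
have card_bad : #|[set psi : Psi d1 d2 d3 (kpar eps) | psi.1.1 \in bad]| =
                (#|bad| * #|coeffs d2 2| * #|coeffs d3 (kpar eps)|)%N.
  by rewrite -!card_set_fst; apply: eq_card => psi; rewrite !inE.
have card_Psi : #|[set: Psi d1 d2 d3 (kpar eps)]| =
                ((2 ^ d1) ^ 2 * #|coeffs d2 2| * #|coeffs d3 (kpar eps)|)%N.
  by rewrite cardsT !card_prod card_ffun !card_ord.
have Psi_gt0 : (0 < #|[set: Psi d1 d2 d3 (kpar eps)]|)%N.
  by rewrite card_Psi !muln_gt0 !card_ffun !card_ord !expn_gt0.
rewrite /prob_notE1 ler_pdivrMr ?ltr0n // mulrC ler_pdivlMr ?exprn_gt0 //.
rewrite -natrX -natrM ler_nat card_Psi.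
rewrite (leq_trans (leq_mul (subset_leq_card notE1_bad) (leqnn _))) //.
by rewrite card_bad mulnAC leq_mul2r mulnAC leq_mul2r bad_bound !orbT.
Qed.
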